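(* Let $1<w\le 2$, $1<h\le 2$ and $n\ge 2$. There exist reals $\frac12\le y_1<\dots<y_n\le h-\frac12$ such that the instance consisting of the strip $[0,w]\times[0,h]$ and these $y_i$ admits a staircase layout with gap $\frac{w+h-2}{n-1}$.
   Context: A layout is a pair $(\mathbf x,\prec)$ where $\mathbf x=(x_1,\dots,x_n)$ with $x_i\in[\frac12,w-\frac12]$, and $\prec$ is a total order (stacking order) on the squares $s_1,\dots,s_n$, where $s_i$ is the closed axis-parallel unit square with centre $(x_i,y_i)$. If $s_i\prec s_j$ we say $s_j$ is in front of $s_i$ and $s_i$ is behind $s_j$. A point $p$ on the boundary of $s_i$ is visible if every square $s_j$ ($j\neq i$) containing $p$ is behind $s_i$. The visible perimeter of $s_i$ is the total length of its visible boundary points; the gap of $s_i$ is its visible perimeter minus $2$, and the gap of a layout is the minimum of the gaps of its squares. A staircase is a layout in which $x_1\le\dots\le x_n$ or $x_1\ge\dots\ge x_n$, and in which $s_1\prec\dots\prec s_n$ or $s_1\succ\dots\succ s_n$. *)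

From HB Require Import structures.
From mathcomp Require Import all_boot all_order all_algebra.
From mathcomp Require Import all_classical all_reals all_analysis.
From mathcomp Require Import fingroup perm.
Set Implicit Arguments. Unset Strict Implicit. Unset Printing Implicit Defensive.
Import Order.TTheory GRing.Theory Num.Theory.
Local Open Scope ring_scope.
Local Open Scope classical_set_scope.

Definition unit_square {R : realType} (cx cy : R) : set (R * R) :=
  [set p | `|p.1 - cx| <= 2^-1 /\ `|p.2 - cy| <= 2^-1].

(* A stacking order on the n squares is encoded by a rank permutation
   sigma : s_i is behind s_j (s_i ≺ s_j) iff sigma i < sigma j. *)
Definition behind {n : nat} (sigma : {perm 'I_n}) (i j : 'I_n) : bool :=
  (sigma i < sigma j)%N.

Definition visible_pt {R : realType} {n : nat} (x y : 'I_n -> R)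
    (sigma : {perm 'I_n}) (i : 'I_n) (p : R * R) : Prop :=
  forall j : 'I_n, j != i -> unit_square (x j) (y j) p -> behind sigma j i.

Definition edge_pt {R : realType} (cx cy : R) (k : 'I_4) (t : R) : R * R :=
  match val k with
  | 0 => (cx - 2^-1 + t, cy - 2^-1)
  | 1 => (cx - 2^-1 + t, cy + 2^-1)
  | 2 => (cx - 2^-1, cy - 2^-1 + t)
  | _ => (cx + 2^-1, cy - 2^-1 + t)
  end.

Definition visible_perimeter {R : realType} {n : nat} (x y : 'I_n -> R)
    (sigma : {perm 'I_n}) (i : 'I_n) : \bar R :=
  (\sum_(k < 4)
     (@lebesgue_measure R)
       [set t : R | ((0 <= t <= 1)%R /\ visible_pt x y sigma i (edge_pt (x i) (y i) k t))])%E.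

Definition square_gap {R : realType} {n : nat} (x y : 'I_n -> R)
    (sigma : {perm 'I_n}) (i : 'I_n) : \bar R :=
  (visible_perimeter x y sigma i - 2%:E)%E.

Definition layout_gap {R : realType} {n : nat} (x y : 'I_n -> R)
    (sigma : {perm 'I_n}) : \bar R :=
  (\big[Order.min/+oo]_(i < n) square_gap x y sigma i)%E.

Definition is_layout {R : realType} {n : nat} (w : R) (x : 'I_n -> R) : Prop :=
  forall i, 2^-1 <= x i <= w - 2^-1.

Definition is_staircase {R : realType} {n : nat} (x : 'I_n -> R)
    (sigma : {perm 'I_n}) : Prop :=
  ((forall i j : 'I_n, (i <= j)%N -> x i <= x j) \/
   (forall i j : 'I_n, (i <= j)%N -> x j <= x i)) /\
  ((forall i j : 'I_n, (i < j)%N -> behind sigma i j) \/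
   (forall i j : 'I_n, (i < j)%N -> behind sigma j i)).

From HB Require Import structures.
From mathcomp Require Import all_boot all_order all_algebra.
From mathcomp Require Import all_classical all_reals all_analysis.
From mathcomp Require Import fingroup perm.
From mathcomp Require Import ring lra.
Import Order.TTheory GRing.Theory Num.Theory.
Local Open Scope ring_scope.
Local Open Scope classical_set_scope.

(* Put the centres on the arithmetic progression from (1/2, 1/2) to
   (w - 1/2, h - 1/2), with steps a = (w - 1)/(n - 1) and b = (h - 1)/(n - 1),
   each square in front of its predecessor.  The bottom and left edges of
   every square are then fully visible, while the top and right edges of s_i
   are covered by s_(i+1) except for pieces of length a and b.  So every
   square but the last has gap a + b, and the last one has gap 2 >= a + b. *)

Section StaircaseLayout.
Context {R : realType} {n : nat}.
Implicit Types (x y : 'I_n -> R) (sigma : {perm 'I_n}) (i j : 'I_n).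

Lemma behind1 i j : behind (1%g : {perm 'I_n}) i j = (i < j)%N.
Proof. by rewrite /behind !perm1. Qed.

Lemma behind_total {sigma i j} : j != i -> ~~ behind sigma j i -> behind sigma i j.
Proof.
rewrite /behind -leqNgt leq_eqVlt => ji /orP[/eqP eq_sigma | //].
by rewrite (perm_inj (val_inj eq_sigma)) eqxx in ji.
Qed.

Lemma visible_pt_transpose x y sigma i (p : R * R) :
  visible_pt x y sigma i p <-> visible_pt y x sigma i (p.2, p.1).
Proof. by case: p => p1 p2; split=> vis j ji [? ?]; apply: vis. Qed.

Lemma visible_bottom x y sigma i (s : R) :
  (forall j, behind sigma i j -> y i < y j) ->
  visible_pt x y sigma i (s, y i - 2^-1).
Proof.
move=> above j ji [_ /=]; rewrite ler_norml => /andP[low _].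
apply/negPn/negP => /(behind_total ji)/above; lra.
Qed.

Definition stair (a : R) i : R := 2^-1 + (i : nat)%:R * a.

Lemma stair_succ a i (lt_i1n : (i.+1 < n)%N) :
  stair a (Ordinal lt_i1n) = stair a i + a.
Proof. by rewrite /stair /= -natr1; ring. Qed.

Lemma stair_le a i j : 0 <= a -> (i <= j)%N -> stair a i <= stair a j.
Proof. by move=> a0 ij; rewrite lerD2l ler_wpM2r // ler_nat. Qed.

Lemma stair_sub_ge {a : R} {i j} : 0 <= a -> (i < j)%N -> a <= stair a j - stair a i.
Proof.
move=> a0 ij; have : (i : nat).+1%:R <= (j : nat)%:R :> R by rewrite ler_nat.
rewrite /stair -natr1 => ij_R; nra.
Qed.

Lemma stair_lt a i j : 0 < a -> (i < j)%N -> stair a i < stair a j.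
Proof. by move=> a0 ij; have := stair_sub_ge (ltW a0) ij; lra. Qed.

Lemma stair_in_strip (w : R) i : 1 <= w -> (1 < n)%N ->
  2^-1 <= stair ((w - 1) / (n%:R - 1)) i <= w - 2^-1.
Proof.
move=> w1 n1; have n1_R : 1 < n%:R :> R by rewrite ltr1n.
have i_R : (i : nat)%:R <= n%:R - 1 :> R.
  by rewrite lerBrDr natr1 ler_nat ltn_ord.
have : (i : nat)%:R * ((w - 1) / (n%:R - 1)) <= w - 1.
  by rewrite mulrA ler_pdivrMr ?subr_gt0 //; nra.
have : 0 <= (i : nat)%:R * ((w - 1) / (n%:R - 1)).
  by rewrite mulr_ge0 ?divr_ge0 //; lra.
rewrite /stair; lra.
Qed.

Lemma step_in_unit {w : R} : 1 < w <= 2 -> (1 < n)%N ->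
  0 < (w - 1) / (n%:R - 1) <= 1.
Proof.
move=> /andP[w1 w2] n1; have : (2 : R) <= n%:R by rewrite (ler_nat R 2 n).
move=> n2; rewrite divr_gt0 ?ler_pdivrMr /=; lra.
Qed.

Lemma visible_top_stair a b i (t : R) : 0 <= a <= 1 -> 0 <= b <= 1 ->
  0 <= t <= 1 ->
  visible_pt (stair a) (stair b) 1%g i (stair a i - 2^-1 + t, stair b i + 2^-1)
  <-> ((i.+1 < n)%N -> t < a).
Proof.
move=> /andP[a0 a1] /andP[b0 b1] /andP[t0 t1]; split.
  move=> vis lt_i1n; rewrite ltNge; apply/negP => a_le_t.
  suff : behind 1%g (Ordinal lt_i1n) i by rewrite behind1 /= ltnNge leqnSn.
  apply: vis; first by rewrite -val_eqE /= neq_ltn ltnSn orbT.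
  rewrite /unit_square /= !stair_succ !ler_norml; split; apply/andP; split; lra.
move=> uncovered j ji [+ _]; rewrite behind1 /= ler_norml => /andP[left_j _].
case: (ltngtP j i) => // [ij | /val_inj eq_ji]; last by rewrite eq_ji eqxx in ji.
have := uncovered (leq_ltn_trans ij (ltn_ord j)).
have := stair_sub_ge a0 ij; lra.
Qed.

Lemma lebesgue_measure_prefix (P : R -> Prop) (c : bool) (a : R) :
  0 <= a <= 1 -> (forall t, 0 <= t <= 1 -> P t <-> (c -> t < a)) ->
  lebesgue_measure [set t | 0 <= t <= 1 /\ P t] = (if c then a else 1)%:E.
Proof.
move=> /andP[a0 a1] hP.
have -> : [set t | 0 <= t <= 1 /\ P t] =
          if c then `[0, a[%classic else `[0, 1]%classic.
  case: c hP => hP; rewrite ?set_itvco ?set_itvcc; apply/seteqP; split=> t /=.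
  - case=> t01 /(hP _ t01)/(_ isT) ta.
    by case/andP: t01 => -> _.
  - move=> /andP[t0 ta]; have t01 : 0 <= t <= 1 by rewrite t0 /=; lra.
    by split=> //; apply/hP.
  - by case.
  - by move=> t01; split=> //; apply/hP.
case: c {hP}; rewrite lebesgue_measure_itv /=; last by rewrite lte_fin ltr01 sube0.
have [a_gt0 | a_le0] := ltrP 0 a; first by rewrite lte_fin a_gt0 sube0.
have -> : a = 0 by apply/le_anti; rewrite a_le0 a0.
by rewrite ltxx.
Qed.

Lemma lebesgue_measure_full (P : R -> Prop) :
  (forall t, 0 <= t <= 1 -> P t) ->
  lebesgue_measure [set t | 0 <= t <= 1 /\ P t] = 1%:E.
Proof.
move=> hP; apply: (@lebesgue_measure_prefix _ false 1) => [|t t01].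
  by rewrite ler01 lexx.
by split=> // _; apply: hP.
Qed.

Lemma visible_edge_measure_stair a b i (k : 'I_4) :
  0 < a <= 1 -> 0 < b <= 1 ->
  lebesgue_measure [set t | 0 <= t <= 1 /\
    visible_pt (stair a) (stair b) 1%g i (edge_pt (stair a i) (stair b i) k t)]
  = (if (i.+1 < n)%N then [:: 1; a; 1; b]`_k else 1)%:E.
Proof.
move=> /andP[a0 a1] /andP[b0 b1].
have ha : 0 <= a <= 1 by rewrite ltW.
have hb : 0 <= b <= 1 by rewrite ltW.
have above d j : 0 < d -> behind (1%g : {perm 'I_n}) i j -> stair d i < stair d j.
  by rewrite behind1; apply: stair_lt.
case: k => -[|[|[|[|//]]]] hk /=; rewrite ?if_same.
- apply: lebesgue_measure_full => t _.
  by apply: visible_bottom => j; apply: above.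
- apply: lebesgue_measure_prefix => // t t01.
  exact: visible_top_stair.
- apply: lebesgue_measure_full => t _; apply/visible_pt_transpose.
  by apply: visible_bottom => j; apply: above.
- apply: lebesgue_measure_prefix => // t t01.
  rewrite visible_pt_transpose; exact: visible_top_stair.
Qed.

Lemma square_gap_stair a b i : 0 < a <= 1 -> 0 < b <= 1 ->
  square_gap (stair a) (stair b) 1%g i = (if (i.+1 < n)%N then a + b else 2)%:E.
Proof.
move=> ha hb; rewrite /square_gap /visible_perimeter.
under eq_bigr => k _ do rewrite visible_edge_measure_stair //.
rewrite sumEFin !big_ord_recl big_ord0 /= -EFinB.
by case: ifP => _; congr (_%:E); rewrite /bump /=; ring.
Qed.

Lemma layout_gap_stair a b : 0 < a <= 1 -> 0 < b <= 1 -> (1 < n)%N ->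
  layout_gap (stair a) (stair b) 1%g = (a + b)%:E.
Proof.
move=> ha hb n1; rewrite /layout_gap.
under eq_bigr => i _ do rewrite square_gap_stair //.
apply/le_anti/andP; split.
  by apply: le_trans (bigmin_le _ (Ordinal (ltnW n1)) _) _; rewrite /= n1.
apply: le_bigmin => [|i _]; first exact: leey.
case/andP: ha => _ a1; case/andP: hb => _ b1.
by rewrite lee_fin; case: ifP => _; lra.
Qed.

End StaircaseLayout.

Theorem lemma5 (R : realType) (w h : R) (n : nat)
  (hw : 1 < w <= 2) (hh : 1 < h <= 2) (hn : (2 <= n)%N) :
  exists y : 'I_n -> R,
    (forall i, 2^-1 <= y i <= h - 2^-1) /\
    (forall i j : 'I_n, (i < j)%N -> y i < y j) /\
    exists (x : 'I_n -> R) (sigma : {perm 'I_n}),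
      is_layout w x /\ is_staircase x sigma /\
      layout_gap x y sigma = ((w + h - 2) / (n%:R - 1))%:E.
Proof.
have ha := step_in_unit hw hn; have hb := step_in_unit hh hn.
have w1 : 1 <= w by case/andP: hw => /ltW.
have h1 : 1 <= h by case/andP: hh => /ltW.
exists (stair ((h - 1) / (n%:R - 1))); split.
  by move=> i; apply: stair_in_strip.
split; first by move=> i j; apply: stair_lt; case/andP: hb.
exists (stair ((w - 1) / (n%:R - 1))), 1%g; split.
  by move=> i; apply: stair_in_strip.
split.
  split; left=> i j ij; last by rewrite behind1.
  by apply: stair_le => //; case/andP: ha => /ltW.
by rewrite layout_gap_stair // -mulrDl addrACA -opprD.
Qed.
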